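(* Let $X\subseteq\mathbb{R}^n$ be nonempty, closed, convex and bounded; let $F:X\to\mathbb{R}^n$ be $L_F$-Lipschitz continuous and monotone on $X$; let $H:X\to\mathbb{R}^n$ be $L_H$-Lipschitz continuous and monotone on $X$; and assume $\mathrm{SOL}(\mathrm{SOL}(X,F),H)\neq\emptyset$. Let $\gamma>0$ and let $\{\eta_k\}$ be a diminishing (nonincreasing) sequence of positive scalars with $\gamma^2(L_F^2+\eta_0^2L_H^2)\le0.5$. Let $x_0\in X$ and for $k\ge0$ set $y_{k+1}=\Pi_X[x_k-\gamma(F(x_k)+\eta_kH(x_k))]$, $x_{k+1}=\Pi_X[x_k-\gamma(F(y_{k+1})+\eta_kH(y_{k+1}))]$, and $\bar y_K=\frac1K\sum_{k=0}^{K-1}y_{k+1}$ for $K\ge1$. Then: (i) For all $K\ge1$, $-B_H\,\mathrm{dist}(\bar y_K,\mathrm{SOL}(X,F))\le\mathrm{Gap}(\bar y_K,\mathrm{SOL}(X,F),H)\le(\gamma\eta_{K-1}K)^{-1}D_X^2$. (ii) For all $K\ge1$, $0\le\mathrm{Gap}(\bar y_K,X,F)\le(\gamma K)^{-1}D_X^2+\sqrt2\,C_HD_XK^{-1}\sum_{k=0}^{K-1}\eta_k$. (iii) If $\lim_{k\to\infty}k\eta_{k-1}=\infty$ and $\lim_{k\to\infty}\frac1k\sum_{j=0}^{k-1}\eta_j=0$ (e.g., $\eta_k=(k+1)^{-b}$ with $0<b<1$), then every accumulation point of $\{\bar y_k\}$ belongs to $\mathrm{SOL}(\mathrm{SOL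}(X,F),H)$.
   Context: $\mathrm{SOL}(Y,G)=\{x\in Y: G(x)^\top(y-x)\ge0\ \forall y\in Y\}$. Dual gap: $\mathrm{Gap}(x,Y,G)=\sup_{y\in Y}G(y)^\top(x-y)$. $\Pi_X$ Euclidean projection; $\mathrm{dist}(x,Y)=\|x-\Pi_Y[x]\|$. $D_X^2=\sup_{x,y\in X}\frac12\|x-y\|^2$ ($D_X\ge0$), $B_H=\sup_{x\in\mathrm{SOL}(X,F)}\|H(x)\|$, $C_H=\sup_{x\in X}\|H(x)\|$. (The averaged iterate corresponds to the recursion $\bar y_{k+1}=(k\bar y_k+y_{k+1})/(k+1)$.) *)

From HB Require Import structures.
From mathcomp Require Import all_boot all_order all_algebra.
From mathcomp Require Import all_classical all_reals all_analysis.
Set Implicit Arguments. Unset Strict Implicit. Unset Printing Implicit Defensive.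
Import Order.TTheory GRing.Theory Num.Theory.
Import numFieldNormedType.Exports.
Local Open Scope classical_set_scope.
Local Open Scope ring_scope.

Section Defs.
Context {R : realType} {n : nat}.
Notation vec := 'rV[R]_n.

Definition dotv (u v : vec) : R := \sum_(i < n) u ord0 i * v ord0 i.
Definition enorm (u : vec) : R := Num.sqrt (dotv u u).

Definition SOL (Y : set vec) (G : vec -> vec) : set vec :=
  [set x | Y x /\ forall y, Y y -> 0 <= dotv (G x) (y - x)].

Definition Gap (x : vec) (Y : set vec) (G : vec -> vec) : R :=
  sup [set dotv (G y) (x - y) | y in Y].

(* dist(x,Y) = inf_{y in Y} ||x - y|| (= ||x - Pi_Y x|| for closed convex Y) *)
Definition distv (x : vec) (Y : set vec) : R :=
  inf [set enorm (x - y) | y in Y].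

Definition DX2 (X : set vec) : R :=
  sup [set (enorm (x - y)) ^+ 2 / 2 | x in X & y in X].

Definition supnorm (Y : set vec) (H : vec -> vec) : R :=
  sup [set enorm (H x) | x in Y].

Definition vi_convex_set (X : set vec) : Prop :=
  forall x y (t : R), X x -> X y -> 0 <= t <= 1 -> X (t *: x + (1 - t) *: y).

Definition vi_bounded_set (X : set vec) : Prop :=
  exists M : R, forall x, X x -> enorm x <= M.

Definition vi_lipschitz_on (X : set vec) (G : vec -> vec) (L : R) : Prop :=
  forall x y, X x -> X y -> enorm (G x - G y) <= L * enorm (x - y).

Definition vi_monotone_on (X : set vec) (G : vec -> vec) : Prop :=
  forall x y, X x -> X y -> 0 <= dotv (G x - G y) (x - y).

Definition vi_is_proj (X : set vec) (x p : vec) : Prop :=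
  X p /\ forall y, X y -> enorm (x - p) <= enorm (x - y).

Definition avg_iter (y : nat -> vec) (K : nat) : vec :=
  K%:R^-1 *: \sum_(k < K) y k.+1.

End Defs.

From HB Require Import structures.
From mathcomp Require Import all_boot all_order all_algebra.
From mathcomp Require Import all_classical all_reals all_analysis.
From mathcomp Require Import ring lra.
Set Implicit Arguments. Unset Strict Implicit. Unset Printing Implicit Defensive.
Import Order.TTheory GRing.Theory Num.Theory.
Import numFieldNormedType.Exports.
Local Open Scope classical_set_scope.
Local Open Scope ring_scope.

(* Each iteration is an extragradient step for the regularized operator F + eta_k H,
   which is (L_F + eta_k L_H)-Lipschitz with gamma (L_F + eta_k L_H) <= 1.  The two
   projection inequalities therefore give, for every u in X,
     2 gamma <F(y_{k+1}) + eta_k H(y_{k+1}), y_{k+1} - u> <= |x_k - u|^2 - |x_{k+1} - u|^2.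
   Monotonicity lets us replace the arguments y_{k+1} of F and H by u.  If u solves
   VI(X,F) the F-term is nonnegative, so dividing by eta_k and summing by parts (eta_k is
   nonincreasing) bounds the average of <H(u), y_{k+1} - u> by D_X^2 / (gamma eta_{K-1} K);
   for u in X the H-term is at least -eta_k C_H sqrt 2 D_X and telescoping bounds the
   average of <F(u), y_{k+1} - u>.  Taking suprema over u gives (i) and (ii), the lower
   bounds coming from Cauchy-Schwarz.  Under the rates of (iii) both bounds vanish, so a
   cluster point satisfies the weak (Minty) variational inequalities, first for F on X,
   then for H on the convex set SOL(X,F); for Lipschitz operators these imply the strong
   ones. *)

Section InnerProduct.
Context {R : realType} {n : nat}.
Implicit Types (u v w : 'rV[R]_n) (a : R).

Lemma dotvC u v : dotv u v = dotv v u.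
Proof. by apply: eq_bigr => i _; rewrite mulrC. Qed.

Lemma dotvDl u v w : dotv (u + v) w = dotv u w + dotv v w.
Proof. by rewrite /dotv -big_split; apply: eq_bigr => i _; rewrite !mxE mulrDl. Qed.

Lemma dotvDr u v w : dotv w (u + v) = dotv w u + dotv w v.
Proof. by rewrite dotvC dotvDl !(dotvC w). Qed.

Lemma dotvZl a u v : dotv (a *: u) v = a * dotv u v.
Proof. by rewrite /dotv mulr_sumr; apply: eq_bigr => i _; rewrite !mxE mulrA. Qed.

Lemma dotvZr a u v : dotv v (a *: u) = a * dotv v u.
Proof. by rewrite dotvC dotvZl dotvC. Qed.

Lemma dotvNl u v : dotv (- u) v = - dotv u v.
Proof. by rewrite -scaleN1r dotvZl mulN1r. Qed.

Lemma dotvNr u v : dotv v (- u) = - dotv v u.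
Proof. by rewrite -scaleN1r dotvZr mulN1r. Qed.

Lemma dotvBl u v w : dotv (u - v) w = dotv u w - dotv v w.
Proof. by rewrite dotvDl dotvNl. Qed.

Lemma dotvBr u v w : dotv w (u - v) = dotv w u - dotv w v.
Proof. by rewrite dotvDr dotvNr. Qed.

Lemma dotv0r u : dotv u 0 = 0.
Proof. by rewrite /dotv big1 // => i _; rewrite mxE mulr0. Qed.

Lemma dotv_sumr u K (f : nat -> 'rV[R]_n) :
  dotv u (\sum_(k < K) f k) = \sum_(k < K) dotv u (f k).
Proof.
elim: K => [|K IH]; first by rewrite !big_ord0 dotv0r.
by rewrite !big_ord_recr /= dotvDr IH.
Qed.

Lemma dotvv_ge0 u : 0 <= dotv u u.
Proof. by apply: sumr_ge0 => i _; rewrite -expr2 sqr_ge0. Qed.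

Lemma enorm_ge0 u : 0 <= enorm u.
Proof. exact: sqrtr_ge0. Qed.

Lemma enorm_sqr u : enorm u ^+ 2 = dotv u u.
Proof. by rewrite /enorm sqr_sqrtr // dotvv_ge0. Qed.

Lemma dotv_sqr_le u v : dotv u v ^+ 2 <= dotv u u * dotv v v.
Proof.
set a := dotv u u; set b := dotv u v; set c := dotv v v.
have quad t : 0 <= a - 2 * t * b + t ^+ 2 * c.
  have := dotvv_ge0 (u - t *: v).
  by rewrite !dotvBl !dotvBr !dotvZl !dotvZr (dotvC v u) -/a -/b -/c; lra.
have [c0|c_neq0] := eqVneq c 0.
  suff -> : b = 0 by rewrite expr0n /= mulr_ge0 ?dotvv_ge0.
  (* a linear function of t that is bounded below has zero slope *)
  apply/eqP/negPn/negP => b_neq0; have := quad ((a + 1) / (2 * b)).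
  rewrite c0 mulr0 addr0 (_ : 2 * ((a + 1) / (2 * b)) * b = a + 1); first lra.
  by field.
have c_gt0 : 0 < c by rewrite lt_def c_neq0 dotvv_ge0.
have := quad (b / c).
rewrite (_ : a - 2 * (b / c) * b + (b / c) ^+ 2 * c = (a * c - b ^+ 2) / c).
  by rewrite pmulr_lge0 ?invr_gt0 // subr_ge0.
by field; rewrite lt0r_neq0.
Qed.

Lemma normr_dotv_le u v : `|dotv u v| <= enorm u * enorm v.
Proof.
rewrite /enorm -sqrtrM ?dotvv_ge0 // -(sqrtr_sqr (dotv u v)).
by rewrite ler_sqrt ?mulr_ge0 ?dotvv_ge0 // dotv_sqr_le.
Qed.

Lemma dotv_le u v : dotv u v <= enorm u * enorm v.
Proof. by move: (normr_dotv_le u v); rewrite ler_norml => /andP[]. Qed.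

Lemma dotv_ge u v : - (enorm u * enorm v) <= dotv u v.
Proof. by move: (normr_dotv_le u v); rewrite ler_norml => /andP[]. Qed.

Lemma enormZ a u : enorm (a *: u) = `|a| * enorm u.
Proof. by rewrite /enorm dotvZl dotvZr mulrA -expr2 sqrtrM ?sqr_ge0 // sqrtr_sqr. Qed.

Lemma enormN u : enorm (- u) = enorm u.
Proof. by rewrite /enorm dotvNl dotvNr opprK. Qed.

Lemma enormD u v : enorm (u + v) <= enorm u + enorm v.
Proof.
rewrite -ler_sqr ?nnegrE ?addr_ge0 ?enorm_ge0 // enorm_sqr sqrrD !enorm_sqr.
by rewrite dotvDl !dotvDr (dotvC v u); have := dotv_le u v; lra.
Qed.

Lemma enormB_le u v : enorm (u - v) <= enorm u + enorm v.
Proof. by rewrite -(enormN v) enormD. Qed.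

End InnerProduct.

Lemma ge0_of_ge_Nmul_small {R : realFieldType} (M c : R) : 0 <= M ->
  (forall t, 0 < t -> t <= 1 -> - (t * M) <= c) -> 0 <= c.
Proof.
move=> M0 small; rewrite leNgt; apply/negP => c_lt0.
have MBc_gt0 : 0 < M - c by lra.
have t_gt0 : 0 < - c / (M - c) by apply: divr_gt0; lra.
have t_le1 : - c / (M - c) <= 1 by rewrite ler_pdivrMr // mul1r; lra.
have := small _ t_gt0 t_le1.
rewrite (_ : - (- c / (M - c) * M) = c * M / (M - c)); last by field; lra.
by rewrite ler_pdivrMr //; nra.
Qed.

Section VariationalInequalities.
Context {R : realType} {n : nat}.
Implicit Types (X Y : set 'rV[R]_n) (G : 'rV[R]_n -> 'rV[R]_n).

Lemma convex_combB (t : R) (z y p : 'rV[R]_n) :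
  z - (t *: y + (1 - t) *: p) = (z - p) - t *: (y - p).
Proof.
by rewrite scalerBl scale1r !scalerBr !opprD !addrA; congr (_ + _); rewrite addrAC.
Qed.

Lemma is_proj_obtuse X (z p y : 'rV[R]_n) :
  vi_convex_set X -> vi_is_proj X z p -> X y -> dotv (z - p) (y - p) <= 0.
Proof.
move=> Xcvx [Xp p_min] Xy; rewrite -oppr_ge0.
apply: (ge0_of_ge_Nmul_small (dotvv_ge0 (y - p))) => t t_gt0 t_le1.
have Xw : X (t *: y + (1 - t) *: p) by apply: Xcvx; rewrite ?(ltW t_gt0).
have := p_min _ Xw; rewrite /enorm ler_sqrt ?dotvv_ge0 // convex_combB.
move: (z - p) (y - p) (dotvv_ge0 (y - p)) => d e ee_ge0.
rewrite dotvBl !dotvBr !dotvZl !dotvZr (dotvC e d) => le_t.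
have : 0 <= t * t * dotv e e by rewrite !mulr_ge0 // ltW.
by rewrite -(ler_pM2l t_gt0); nra.
Qed.

Lemma minty_SOL Y G (L : R) z :
  vi_convex_set Y -> 0 <= L -> vi_lipschitz_on Y G L -> Y z ->
  (forall u, Y u -> dotv (G u) (z - u) <= 0) -> SOL Y G z.
Proof.
move=> Ycvx L0 Glip Yz weak; split => // u Yu.
set r := enorm (u - z).
apply: (@ge0_of_ge_Nmul_small _ (L * (r * r))) => [|t t_gt0 t_le1].
  by rewrite !mulr_ge0 ?enorm_ge0.
set w := t *: u + (1 - t) *: z.
have Yw : Y w by apply: Ycvx; rewrite ?(ltW t_gt0).
have zBw : z - w = - (t *: (u - z)) by rewrite convex_combB subrr add0r.
have Gw_ge0 : 0 <= dotv (G w) (u - z).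
  have := weak _ Yw; rewrite zBw dotvNr dotvZr oppr_le0.
  by rewrite pmulr_rge0.
have Glip_w : enorm (G z - G w) <= L * (t * r).
  by have := Glip _ _ Yz Yw; rewrite zBw enormN enormZ gtr0_norm.
have := dotv_ge (G z - G w) (u - z); rewrite dotvBl -/r.
have : enorm (G z - G w) * r <= L * (t * r) * r by rewrite ler_wpM2r ?enorm_ge0.
have := enorm_ge0 (u - z); rewrite -/r; nra.
Qed.

Lemma SOL_convex X G (L : R) :
  vi_convex_set X -> 0 <= L -> vi_lipschitz_on X G L -> vi_monotone_on X G ->
  vi_convex_set (SOL X G).
Proof.
move=> Xcvx L0 Glip Gmon a b t [Xa a_sol] [Xb b_sol] t01.
apply: (minty_SOL Xcvx L0 Glip (Xcvx _ _ _ Xa Xb t01)) => u Xu.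
case/andP: t01 => t_ge0 t_le1.
have := a_sol _ Xu; have := b_sol _ Xu.
have := Gmon _ _ Xa Xu; have := Gmon _ _ Xb Xu.
rewrite !dotvBl !dotvBr dotvDr !dotvZr => mb ma sb sa.
have : 0 <= t * (dotv (G u) u - dotv (G u) a) by rewrite mulr_ge0 //; lra.
have : 0 <= (1 - t) * (dotv (G u) u - dotv (G u) b) by rewrite mulr_ge0 //; lra.
lra.
Qed.

Lemma avg_iter_convex X (y : nat -> 'rV[R]_n) K :
  vi_convex_set X -> (forall k, X (y k.+1)) -> (0 < K)%N -> X (avg_iter y K).
Proof.
move=> Xcvx Xy; case: K => // K _; elim: K => [|K IH].
  by rewrite /avg_iter big_ord_recr big_ord0 /= add0r invr1 scale1r.
have -> : avg_iter y K.+2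
    = K.+2%:R^-1 *: y K.+2 + (1 - K.+2%:R^-1) *: avg_iter y K.+1.
  rewrite /avg_iter [in LHS]big_ord_recr /= scalerDr addrC scalerA; congr (_ + _).
  congr (_ *: _); rewrite -[K.+2%:R]natr1.
  have k_gt0 : 0 < K.+1%:R :> R by rewrite ltr0n.
  by field; rewrite !lt0r_neq0 // ltr_wpDr.
by apply: Xcvx; rewrite // invr_ge0 ler0n invf_le1 ?ler1n.
Qed.

Lemma dotv_avg_iter (y : nat -> 'rV[R]_n) a u K : (0 < K)%N ->
  dotv a (avg_iter y K - u) = K%:R^-1 * \sum_(k < K) dotv a (y k.+1 - u).
Proof.
move=> K_gt0.
have -> : avg_iter y K - u = K%:R^-1 *: \sum_(k < K) (y k.+1 - u).
  rewrite /avg_iter sumrB sumr_const card_ord scalerBr; congr (_ - _).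
  by rewrite -[u *+ K]scaler_nat scalerA mulVf ?scale1r // pnatr_eq0 -lt0n.
by rewrite dotvZr (dotv_sumr a K (fun k => y k.+1 - u)).
Qed.

End VariationalInequalities.

Section ExtragradientStep.
Context {R : realType} {n : nat}.
Implicit Types (X : set 'rV[R]_n) (G : 'rV[R]_n -> 'rV[R]_n).

Lemma extragradient_descent_of_projections (a u y p g ga : 'rV[R]_n) (c : R) :
  dotv (a - c *: g - p) (u - p) <= 0 ->
  dotv (a - c *: ga - y) (p - y) <= 0 ->
  - (dotv (y - a) (y - a) + dotv (p - y) (p - y)) <= 2 * c * dotv (g - ga) (p - y) ->
  2 * c * dotv g (y - u) <= dotv (a - u) (a - u) - dotv (p - u) (p - u).
Proof.
rewrite !dotvBl !dotvBr !dotvZl ?dotvBl ?dotvBr ?dotvZl.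
rewrite ?(dotvC u a) ?(dotvC y a) ?(dotvC p a) ?(dotvC y u) ?(dotvC p u) ?(dotvC p y).
lra.
Qed.

Lemma lipschitz_dotv_ge (a y p g ga : 'rV[R]_n) (c L : R) :
  0 <= c -> 0 <= L -> c * L <= 1 -> enorm (g - ga) <= L * enorm (y - a) ->
  - (dotv (y - a) (y - a) + dotv (p - y) (p - y)) <= 2 * c * dotv (g - ga) (p - y).
Proof.
move=> c_ge0 L_ge0 cL_le1 g_lip.
rewrite -!enorm_sqr; have := dotv_ge (g - ga) (p - y).
move: (enorm_ge0 (y - a)) (enorm_ge0 (p - y)) g_lip.
move: (enorm (y - a)) (enorm (p - y)) => r s r_ge0 s_ge0 g_lip dot_ge.
have : enorm (g - ga) * s <= L * r * s by rewrite ler_wpM2r.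
have : c * L * (r * s) <= r * s by rewrite ler_piMl ?mulr_ge0.
have := sqr_ge0 (r - s); nra.
Qed.

Lemma extragradient_step X G (L gamma : R) PiX (a u y p : 'rV[R]_n) :
  vi_convex_set X -> 0 <= L -> vi_lipschitz_on X G L ->
  0 <= gamma -> gamma * L <= 1 -> (forall z, vi_is_proj X z (PiX z)) -> X a -> X u ->
  y = PiX (a - gamma *: G a) -> p = PiX (a - gamma *: G y) ->
  2 * gamma * dotv (G y) (y - u) <= dotv (a - u) (a - u) - dotv (p - u) (p - u).
Proof.
move=> Xcvx L_ge0 Glip g_ge0 gL_le1 proj Xa Xu y_def p_def.
have y_proj : vi_is_proj X (a - gamma *: G a) y by rewrite y_def.
have p_proj : vi_is_proj X (a - gamma *: G y) p by rewrite p_def.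
apply: (extragradient_descent_of_projections (ga := G a)).
- exact: is_proj_obtuse Xcvx p_proj Xu.
- exact: is_proj_obtuse Xcvx y_proj p_proj.1.
- exact/(lipschitz_dotv_ge _ g_ge0 L_ge0 gL_le1)/Glip/Xa/y_proj.1.
Qed.

Lemma lipschitz_on_addZ X (F H : 'rV[R]_n -> 'rV[R]_n) (LF LH eta : R) :
  0 <= eta -> vi_lipschitz_on X F LF -> vi_lipschitz_on X H LH ->
  vi_lipschitz_on X (fun v => F v + eta *: H v) (LF + eta * LH).
Proof.
move=> eta_ge0 Flip Hlip u v Xu Xv.
have -> : F u + eta *: H u - (F v + eta *: H v) = (F u - F v) + eta *: (H u - H v).
  by rewrite scalerBr opprD !addrA; congr (_ + _); rewrite addrAC.
apply: le_trans (enormD _ _) _; rewrite enormZ ger0_norm // mulrDl -mulrA.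
by rewrite lerD ?ler_wpM2l ?Flip ?Hlip.
Qed.

End ExtragradientStep.

Lemma stepsize_lipschitz_le1 {R : realFieldType} (gamma LF LH eta eta0 : R) :
  0 <= gamma -> 0 <= LF -> 0 <= LH -> 0 <= eta -> eta <= eta0 ->
  gamma ^+ 2 * (LF ^+ 2 + eta0 ^+ 2 * LH ^+ 2) <= 1 / 2 ->
  gamma * (LF + eta * LH) <= 1.
Proof.
move=> g_ge0 LF_ge0 LH_ge0 eta_ge0 eta_le step_small.
have lhs_ge0 : 0 <= gamma * (LF + eta * LH) by rewrite mulr_ge0 ?addr_ge0 ?mulr_ge0.
rewrite -ler_sqr ?nnegrE // expr1n.
have : eta ^+ 2 * LH ^+ 2 <= eta0 ^+ 2 * LH ^+ 2.
  by rewrite ler_wpM2r ?sqr_ge0 // ler_sqr ?nnegrE //; apply: le_trans eta_le.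
have := sqr_ge0 (LF - eta * LH); have := sqr_ge0 gamma; nra.
Qed.

Lemma sum_weighted_telescope_le {R : realFieldType} (d w : nat -> R) (D : R) :
  (forall k, 0 <= d k <= D) -> (forall k, 0 < w k) -> (forall k, w k.+1 <= w k) ->
  forall m, \sum_(k < m.+1) (d k - d k.+1) / w k <= (D - d m.+1) / w m.
Proof.
move=> d_bnd w_gt0 w_noninc; elim=> [|m IH].
  rewrite big_ord_recr big_ord0 /= add0r ler_pM2r ?invr_gt0 //.
  by have := d_bnd 0%N; lra.
rewrite big_ord_recr /=.
have : (D - d m.+1) / w m <= (D - d m.+1) / w m.+1.
  by rewrite ler_wpM2l ?lef_pV2 ?posrE //; have := d_bnd m.+1; lra.
rewrite (_ : (D - d m.+2) / w m.+1 = (D - d m.+1) / w m.+1 + (d m.+1 - d m.+2) / w m.+1).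
  by lra.
by rewrite -mulrDl; congr (_ * _); ring.
Qed.

Lemma cluster_closed_mem {T : topologicalType} (u : nat -> T) (C : set T) z :
  closed C -> (\forall K \near \oo, C (u K)) -> cluster (u @ \oo) z -> C z.
Proof.
by move=> C_closed C_ev; rewrite clusterE => /(_ C C_ev); rewrite -(closure_id C).1.
Qed.

Section GapFunctions.
Context {R : realType} {n : nat}.
Implicit Types (X Y : set 'rV[R]_n) (G : 'rV[R]_n -> 'rV[R]_n) (u v x : 'rV[R]_n).

Definition bounded_on Y G := exists C : R, forall v, Y v -> enorm (G v) <= C.

Lemma enormB_le_bound X (M : R) u v :
  (forall w, X w -> enorm w <= M) -> X u -> X v -> enorm (u - v) <= M + M.
Proof. by move=> XM Xu Xv; apply: le_trans (enormB_le u v) _; rewrite lerD ?XM. Qed.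

Lemma lipschitz_bounded_on X G (L : R) :
  vi_bounded_set X -> X !=set0 -> 0 <= L -> vi_lipschitz_on X G L -> bounded_on X G.
Proof.
move=> [M XM] [u Xu] L_ge0 Glip; exists (L * (M + M) + enorm (G u)); move=> v Xv.
have := enormD (G v - G u) (G u); rewrite subrK => /le_trans; apply.
rewrite lerD2r; apply: le_trans (Glip _ _ Xv Xu) _.
by rewrite ler_wpM2l // (enormB_le_bound XM).
Qed.

Lemma enorm_le_supnorm Y G u : bounded_on Y G -> Y u -> enorm (G u) <= supnorm Y G.
Proof.
move=> [C GC] Yu; apply: ub_le_sup; last by exists u.
by exists C; move=> _ [v Yv <-]; apply: GC.
Qed.

Lemma le_Gap Y G x u :
  vi_bounded_set Y -> bounded_on Y G -> Y u -> dotv (G u) (x - u) <= Gap x Y G.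
Proof.
move=> [M YM] [C GC] Yu; apply: ub_le_sup; last by exists u.
exists (C * (enorm x + M)); move=> _ [v Yv <-].
apply: le_trans (dotv_le _ _) (ler_pM (enorm_ge0 _) (enorm_ge0 _) (GC _ Yv) _).
by apply: le_trans (enormB_le _ _) _; rewrite lerD2l YM.
Qed.

Lemma Gap_le Y G x (B : R) :
  Y !=set0 -> (forall u, Y u -> dotv (G u) (x - u) <= B) -> Gap x Y G <= B.
Proof.
move=> [u Yu] GB; apply: ge_sup => [|_ [v Yv <-]]; last exact: GB.
by exists (dotv (G u) (x - u)), u.
Qed.

Lemma Gap_ge_Nsupnorm_dist Y G x :
  Y !=set0 -> vi_bounded_set Y -> bounded_on Y G ->
  - supnorm Y G * distv x Y <= Gap x Y G.
Proof.
move=> [u Yu] Ybnd Gbnd; set B := supnorm Y G.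
have dist_bound v : Y v -> - (B * enorm (x - v)) <= Gap x Y G.
  move=> Yv; apply: le_trans (le_Gap x Ybnd Gbnd Yv); apply: le_trans (dotv_ge _ _).
  by rewrite lerN2 ler_wpM2r ?enorm_ge0 ?enorm_le_supnorm.
have [B_gt0|B_le0] := ltrP 0 B; last first.
  have B0 : B = 0.
    by apply/eqP; rewrite eq_le B_le0 (le_trans (enorm_ge0 _) (enorm_le_supnorm Gbnd Yu)).
  by have := dist_bound _ Yu; rewrite B0 !(mul0r, oppr0).
rewrite mulNr lerNl -ler_pdivrMl //; apply: lb_le_inf => [|_ [v Yv <-]].
  by exists (enorm (x - u)), u.
by rewrite ler_pdivrMl // lerNl dist_bound.
Qed.

Lemma dotv_le_DX2 X u v :
  vi_bounded_set X -> X u -> X v -> dotv (u - v) (u - v) <= 2 * DX2 X.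
Proof.
move=> [M XM] Xu Xv; have M_ge0 : 0 <= M := le_trans (enorm_ge0 u) (XM _ Xu).
suff : enorm (u - v) ^+ 2 / 2 <= DX2 X by rewrite enorm_sqr; lra.
apply: ub_le_sup; last by exists u => //; exists v.
exists ((M + M) ^+ 2 / 2); move=> _ [a Xa [b Xb <-]].
by rewrite ler_pM2r // ler_sqr ?nnegrE ?enorm_ge0 ?addr_ge0 ?(enormB_le_bound XM).
Qed.

Lemma enormB_le_DX2 X u v :
  vi_bounded_set X -> X u -> X v -> enorm (u - v) <= Num.sqrt 2 * Num.sqrt (DX2 X).
Proof.
move=> Xbnd Xu Xv; have := dotv_le_DX2 Xbnd Xu Xv.
have := dotvv_ge0 (u - v); rewrite /enorm -sqrtrM // => ge0 le2D.
by rewrite ler_sqrt //; apply: le_trans ge0 le2D.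
Qed.

Lemma dotv_continuous (a : 'rV[R]_n) : continuous (dotv a).
Proof.
rewrite /dotv => v; apply: continuous_big => [|i _ w]; first exact: add_continuous.
by apply: continuousM; [exact: cst_continuous | exact: coord_continuous].
Qed.

Lemma cluster_dotv_le0 (u : nat -> 'rV[R]_n) (z a w : 'rV[R]_n) (g : nat -> R) :
  cluster (u @ \oo) z -> g @ \oo --> 0 ->
  (forall K, (0 < K)%N -> dotv a (u K - w) <= g K) -> dotv a (z - w) <= 0.
Proof.
move=> z_cluster g_cvg0 ug; rewrite dotvBr subr_le0; apply/ler_addgt0Pr => e e_gt0.
apply: (cluster_closed_mem (C := [set v | dotv a v <= dotv a w + e])) z_cluster.
  apply: (@preimage_closed _ _ (dotv a) [set r | r <= dotv a w + e]).
    by move=> v _; exact: dotv_continuous.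
  exact: closed_le.
near=> K; rewrite /= -lerBlDl -dotvBr.
apply: le_trans (ug K _) _; first by near: K; exact: nbhs_infty_gt.
by near: K; exact: (cvgr_le _ g_cvg0 _ e_gt0).
Unshelve. all: by end_near.
Qed.

End GapFunctions.

Lemma cvg_inv_natr {R : realType} : (fun K : nat => (K%:R : R)^-1) @ \oo --> 0.
Proof.
apply/(gtr0_cvgV0 (f := fun K : nat => K%:R)); last exact: cvgr_idn.
by near=> K; rewrite ltr0n; near: K; exact: nbhs_infty_gt.
Unshelve. all: by end_near.
Qed.

Section RegularizedExtragradient.
Context {R : realType} {n : nat}.
Variables (X : set 'rV[R]_n) (F H : 'rV[R]_n -> 'rV[R]_n) (LF LH gamma : R).
Variables (eta : nat -> R) (PiX : 'rV[R]_n -> 'rV[R]_n) (x y : nat -> 'rV[R]_n).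
Hypotheses (Xcvx : vi_convex_set X) (Xbnd : vi_bounded_set X).
Hypotheses (LF_ge0 : 0 <= LF) (Flip : vi_lipschitz_on X F LF) (Fmon : vi_monotone_on X F).
Hypotheses (LH_ge0 : 0 <= LH) (Hlip : vi_lipschitz_on X H LH) (Hmon : vi_monotone_on X H).
Hypotheses (gamma_gt0 : 0 < gamma) (eta_gt0 : forall k, 0 < eta k).
Hypothesis eta_noninc : forall k, eta k.+1 <= eta k.
Hypothesis step_small : gamma ^+ 2 * (LF ^+ 2 + eta 0%N ^+ 2 * LH ^+ 2) <= 1 / 2.
Hypotheses (PiX_proj : forall z, vi_is_proj X z (PiX z)) (x0_in : X (x 0%N)).
Hypothesis y_def : forall k, y k.+1 = PiX (x k - gamma *: (F (x k) + eta k *: H (x k))).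
Hypothesis x_def : forall k, x k.+1 = PiX (x k - gamma *: (F (y k.+1) + eta k *: H (y k.+1))).

Local Notation D := (DX2 X).
Let d u k := dotv (x k - u) (x k - u).

Lemma x_in_X k : X (x k).
Proof. by case: k => // k; rewrite x_def; exact: (PiX_proj _).1. Qed.

Lemma y_in_X k : X (y k.+1).
Proof. by rewrite y_def; exact: (PiX_proj _).1. Qed.

Lemma iterate_descent k u : X u ->
  2 * gamma * dotv (F (y k.+1) + eta k *: H (y k.+1)) (y k.+1 - u) <= d u k - d u k.+1.
Proof.
move=> Xu; have eta_ge0 := ltW (eta_gt0 k).
have eta_le_eta0 : eta k <= eta 0%N.
  by elim: k {Xu eta_ge0} => // k IH; apply: le_trans (eta_noninc k) IH.
apply: (extragradient_step Xcvx _ (lipschitz_on_addZ eta_ge0 Flip Hlip) (ltW gamma_gt0)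
          _ PiX_proj (x_in_X k) Xu (y_def k) (x_def k)).
  by rewrite addr_ge0 ?mulr_ge0.
exact: stepsize_lipschitz_le1 (ltW gamma_gt0) LF_ge0 LH_ge0 eta_ge0 eta_le_eta0 step_small.
Qed.

Lemma sum_descent_le u (w : nat -> R) m : X u ->
  (forall k, 0 < w k) -> (forall k, w k.+1 <= w k) ->
  \sum_(k < m.+1) (d u k - d u k.+1) / w k <= 2 * D / w m.
Proof.
move=> Xu w_gt0 w_noninc.
apply: le_trans (@sum_weighted_telescope_le _ (d u) w (2 * D) _ w_gt0 w_noninc m) _ => [k|].
  by rewrite /d dotvv_ge0 (dotv_le_DX2 Xbnd (x_in_X k) Xu).
rewrite ler_wpM2r ?invr_ge0 ?(ltW (w_gt0 m)) //.
by have := dotvv_ge0 (x m.+1 - u); rewrite /d; lra.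
Qed.

Lemma dotv_H_step_le k u : SOL X F u ->
  dotv (H u) (y k.+1 - u) <= (d u k - d u k.+1) / (2 * gamma * eta k).
Proof.
move=> [Xu u_sol]; have := iterate_descent k Xu; rewrite dotvDl dotvZl => desc.
have := Fmon (y_in_X k) Xu; have := Hmon (y_in_X k) Xu; have := u_sol _ (y_in_X k).
rewrite !dotvBl => Fu_ge0 Hmon_k Fmon_k.
have eta_k := eta_gt0 k.
have Hle : eta k * dotv (H u) (y k.+1 - u) <= eta k * dotv (H (y k.+1)) (y k.+1 - u).
  by apply: ler_wpM2l; [exact: ltW | lra].
have : 2 * gamma * (eta k * dotv (H u) (y k.+1 - u))
    <= 2 * gamma * (dotv (F (y k.+1)) (y k.+1 - u) + eta k * dotv (H (y k.+1)) (y k.+1 - u)).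
  by apply: ler_wpM2l; [rewrite mulr_ge0 // ltW | lra].
by rewrite ler_pdivlMr ?mulr_gt0 //; lra.
Qed.

Let X_ne : X !=set0 := ex_intro X (x 0%N) x0_in.

Lemma H_bounded : bounded_on X H.
Proof. exact: lipschitz_bounded_on Xbnd X_ne LH_ge0 Hlip. Qed.

Lemma dotv_F_step_le k u : X u ->
  dotv (F u) (y k.+1 - u)
    <= (d u k - d u k.+1) / (2 * gamma) + eta k * (Num.sqrt 2 * supnorm X H * Num.sqrt D).
Proof.
move=> Xu; have := iterate_descent k Xu; rewrite dotvDl dotvZl => desc.
have := Fmon (y_in_X k) Xu; rewrite dotvBl => Fmon_k.
have Hy_ge : - (Num.sqrt 2 * supnorm X H * Num.sqrt D) <= dotv (H (y k.+1)) (y k.+1 - u).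
  apply: le_trans (dotv_ge _ _); rewrite lerN2 -mulrA mulrCA.
  apply: ler_pM; rewrite ?enorm_ge0 //; first exact: enorm_le_supnorm H_bounded (y_in_X k).
  exact: enormB_le_DX2 Xbnd (y_in_X k) Xu.
have eta_k := eta_gt0 k.
have : - (eta k * (Num.sqrt 2 * supnorm X H * Num.sqrt D))
    <= eta k * dotv (H (y k.+1)) (y k.+1 - u).
  by rewrite -mulrN; apply: ler_wpM2l; [exact: ltW | lra].
rewrite -lerBlDr ler_pdivlMr ?mulr_gt0 // => Hy_eta.
apply: le_trans desc; rewrite mulrC; apply: ler_wpM2l; last lra.
by rewrite mulr_ge0 // ltW.
Qed.

Lemma avg_dotv_H_le K u : (0 < K)%N -> SOL X F u ->
  dotv (H u) (avg_iter y K - u) <= (gamma * eta K.-1 * K%:R)^-1 * D.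
Proof.
case: K => // m _ u_sol; rewrite dotv_avg_iter //=.
have w_gt0 k : 0 < 2 * gamma * eta k by rewrite !mulr_gt0.
have w_noninc k : 2 * gamma * eta k.+1 <= 2 * gamma * eta k.
  by rewrite ler_pM2l ?mulr_gt0.
have sum_le : \sum_(k < m.+1) dotv (H u) (y k.+1 - u) <= 2 * D / (2 * gamma * eta m).
  apply: le_trans (sum_descent_le m u_sol.1 w_gt0 w_noninc).
  by apply: ler_sum => k _; exact: dotv_H_step_le.
have -> : (gamma * eta m * m.+1%:R)^-1 * D = m.+1%:R^-1 * (2 * D / (2 * gamma * eta m)).
  by field; rewrite !lt0r_neq0 ?ltr0n.
by rewrite ler_wpM2l // invr_ge0.
Qed.

Lemma avg_dotv_F_le K u : (0 < K)%N -> X u ->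
  dotv (F u) (avg_iter y K - u)
    <= (gamma * K%:R)^-1 * D
       + Num.sqrt 2 * supnorm X H * Num.sqrt D * K%:R^-1 * \sum_(k < K) eta k.
Proof.
case: K => // m _ Xu; rewrite dotv_avg_iter //.
set c := Num.sqrt 2 * supnorm X H * Num.sqrt D.
have sum_le : \sum_(k < m.+1) dotv (F u) (y k.+1 - u)
    <= 2 * D / (2 * gamma) + (\sum_(k < m.+1) eta k) * c.
  have w_gt0 (k : nat) : 0 < 2 * gamma by rewrite mulr_gt0.
  apply: le_trans (_ : _ <= \sum_(k < m.+1) ((d u k - d u k.+1) / (2 * gamma) + eta k * c)) _.
    by apply: ler_sum => k _; exact: dotv_F_step_le.
  rewrite big_split /= mulr_suml lerD2r.
  exact: (sum_descent_le m Xu w_gt0 (fun=> lexx _)).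
have -> : (gamma * m.+1%:R)^-1 * D + c * m.+1%:R^-1 * \sum_(k < m.+1) eta k
    = m.+1%:R^-1 * (2 * D / (2 * gamma) + (\sum_(k < m.+1) eta k) * c).
  by field; rewrite !lt0r_neq0 ?ltr0n.
by rewrite ler_wpM2l // invr_ge0.
Qed.

Lemma Gap_SOL_avg_bounds K : (0 < K)%N -> SOL X F !=set0 ->
  - supnorm (SOL X F) H * distv (avg_iter y K) (SOL X F) <= Gap (avg_iter y K) (SOL X F) H
  /\ Gap (avg_iter y K) (SOL X F) H <= (gamma * eta K.-1 * K%:R)^-1 * D.
Proof.
move=> K_gt0 SOL_ne; split; last exact: Gap_le SOL_ne (fun u => avg_dotv_H_le K_gt0).
have [M XM] := Xbnd; have [C HC] := H_bounded.
apply: Gap_ge_Nsupnorm_dist SOL_ne _ _; first by exists M => v [/XM].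
by exists C => v [/HC].
Qed.

Lemma Gap_X_avg_bounds K : (0 < K)%N ->
  0 <= Gap (avg_iter y K) X F
  /\ Gap (avg_iter y K) X F
       <= (gamma * K%:R)^-1 * D
          + Num.sqrt 2 * supnorm X H * Num.sqrt D * K%:R^-1 * \sum_(k < K) eta k.
Proof.
move=> K_gt0; split; last exact: Gap_le X_ne (fun u => avg_dotv_F_le K_gt0).
have avg_in : X (avg_iter y K) := avg_iter_convex Xcvx y_in_X K_gt0.
have Fbnd := lipschitz_bounded_on Xbnd X_ne LF_ge0 Flip.
by have := le_Gap (avg_iter y K) Xbnd Fbnd avg_in; rewrite subrr dotv0r.
Qed.

Lemma H_gap_rate_cvg0 : (fun K : nat => K%:R * eta K.-1) @ \oo --> +oo ->
  (fun K : nat => (gamma * eta K.-1 * K%:R)^-1 * D) @ \oo --> 0.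
Proof.
move=> Keta_cvgy.
have -> : (fun K : nat => (gamma * eta K.-1 * K%:R)^-1 * D)
    = (fun K : nat => (K%:R * eta K.-1)^-1 * (D / gamma)).
  by apply/funext => K; rewrite !invfM; ring.
rewrite -(mul0r (D / gamma)); apply: cvgMl.
apply/(gtr0_cvgV0 (f := fun K : nat => K%:R * eta K.-1)) => //.
by near=> K; rewrite mulr_gt0 ?ltr0n //; near: K; exact: nbhs_infty_gt.
Unshelve. all: by end_near.
Qed.

Lemma F_gap_rate_cvg0 :
  (fun K : nat => K%:R^-1 * \sum_(j < K) eta j) @ \oo --> 0 ->
  (fun K : nat => (gamma * K%:R)^-1 * D
     + Num.sqrt 2 * supnorm X H * Num.sqrt D * K%:R^-1 * \sum_(k < K) eta k) @ \oo --> 0.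
Proof.
move=> avg_eta_cvg0; set c := Num.sqrt 2 * supnorm X H * Num.sqrt D.
have -> : (fun K : nat => (gamma * K%:R)^-1 * D + c * K%:R^-1 * \sum_(k < K) eta k)
  = (fun K : nat => K%:R^-1 * (D / gamma) + K%:R^-1 * (\sum_(k < K) eta k) * c).
  by apply/funext => K; rewrite invfM; ring.
have lim1 : (fun K : nat => K%:R^-1 * (D / gamma)) @ \oo --> 0.
  by rewrite -[X in _ --> X](mul0r (D / gamma)); exact: cvgMl cvg_inv_natr.
have lim2 : (fun K : nat => K%:R^-1 * (\sum_(k < K) eta k) * c) @ \oo --> 0.
  by rewrite -[X in _ --> X](mul0r c); exact: cvgMl avg_eta_cvg0.
by rewrite -[X in _ --> X](addr0 0); exact: cvgD lim1 lim2.
Qed.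

Lemma cluster_avg_in_SOL_SOL : closed X ->
  (fun K : nat => K%:R * eta K.-1) @ \oo --> +oo ->
  (fun K : nat => K%:R^-1 * \sum_(j < K) eta j) @ \oo --> 0 ->
  forall z, cluster (avg_iter y @ \oo) z -> SOL (SOL X F) H z.
Proof.
move=> Xcl Keta_cvgy avg_eta_cvg0 z z_cluster.
have zX : X z.
  apply: cluster_closed_mem Xcl _ z_cluster.
  by near=> K; apply: avg_iter_convex Xcvx y_in_X _; near: K; exact: nbhs_infty_gt.
have zS : SOL X F z.
  apply: minty_SOL Xcvx LF_ge0 Flip zX _ => u Xu.
  apply: cluster_dotv_le0 z_cluster (F_gap_rate_cvg0 avg_eta_cvg0) _ => K K_gt0.
  exact: avg_dotv_F_le.
have Hlip_S : vi_lipschitz_on (SOL X F) H LH by move=> a b [Xa _] [Xb _]; exact: Hlip.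
apply: minty_SOL (SOL_convex Xcvx LF_ge0 Flip Fmon) LH_ge0 Hlip_S zS _ => u u_sol.
apply: cluster_dotv_le0 z_cluster (H_gap_rate_cvg0 Keta_cvgy) _ => K K_gt0.
exact: avg_dotv_H_le.
Unshelve. all: by end_near.
Qed.

End RegularizedExtragradient.

Theorem theorem3p4 (R : realType) (n : nat) (X : set 'rV[R]_n)
  (F H : 'rV[R]_n -> 'rV[R]_n) (LF LH gamma : R) (eta : nat -> R)
  (PiX : 'rV[R]_n -> 'rV[R]_n) (x y : nat -> 'rV[R]_n) :
  X !=set0 -> topology_structure.closed X -> vi_convex_set X -> vi_bounded_set X ->
  0 <= LF -> vi_lipschitz_on X F LF -> vi_monotone_on X F ->
  0 <= LH -> vi_lipschitz_on X H LH -> vi_monotone_on X H ->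
  SOL (SOL X F) H !=set0 ->
  0 < gamma -> (forall k, 0 < eta k) -> (forall k, eta k.+1 <= eta k) ->
  gamma ^+ 2 * (LF ^+ 2 + eta 0%N ^+ 2 * LH ^+ 2) <= 1 / 2 ->
  (forall z, vi_is_proj X z (PiX z)) ->
  X (x 0%N) ->
  (forall k, y k.+1 = PiX (x k - gamma *: (F (x k) + eta k *: H (x k)))) ->
  (forall k, x k.+1 = PiX (x k - gamma *: (F (y k.+1) + eta k *: H (y k.+1)))) ->
  (* (i) *)
  (forall K, (1 <= K)%N ->
     - supnorm (SOL X F) H * distv (avg_iter y K) (SOL X F)
       <= Gap (avg_iter y K) (SOL X F) H
     /\ Gap (avg_iter y K) (SOL X F) H
       <= (gamma * eta K.-1 * K%:R)^-1 * DX2 X)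
  /\
  (* (ii) *)
  (forall K, (1 <= K)%N ->
     0 <= Gap (avg_iter y K) X F
     /\ Gap (avg_iter y K) X F
       <= (gamma * K%:R)^-1 * DX2 X
          + Num.sqrt 2 * supnorm X H * Num.sqrt (DX2 X) * K%:R^-1
            * \sum_(k < K) eta k)
  /\
  (* (iii) *)
  (((fun k : nat => k%:R * eta k.-1) @ \oo --> +oo) ->
   ((fun k : nat => k%:R^-1 * \sum_(j < k) eta j) @ \oo --> (0 : R)) ->
   forall z, cluster ((avg_iter y) @ \oo) z -> SOL (SOL X F) H z).
Proof.
move=> _ Xcl Xcvx Xbnd LF_ge0 Flip Fmon LH_ge0 Hlip Hmon [z0 [z0_sol _]] gamma_gt0 eta_gt0
  eta_noninc step_small PiX_proj x0_in y_def x_def.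
split; [|split].
- move=> K K_gt0.
  exact: (Gap_SOL_avg_bounds Xcvx Xbnd LF_ge0 Flip Fmon LH_ge0 Hlip Hmon gamma_gt0 eta_gt0
           eta_noninc step_small PiX_proj x0_in y_def x_def K_gt0 (ex_intro _ z0 z0_sol)).
- move=> K K_gt0.
  exact: (Gap_X_avg_bounds Xcvx Xbnd LF_ge0 Flip Fmon LH_ge0 Hlip gamma_gt0 eta_gt0
           eta_noninc step_small PiX_proj x0_in y_def x_def K_gt0).
- exact: (cluster_avg_in_SOL_SOL Xcvx Xbnd LF_ge0 Flip Fmon LH_ge0 Hlip Hmon gamma_gt0 eta_gt0
           eta_noninc step_small PiX_proj x0_in y_def x_def Xcl).
Qed.
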